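(* Let $0<\alpha_1\le\dots\le\alpha_n\le1$, $\alpha_0:=0$. For all $p,q\in\mathcal{S}_2^n$, the fractional join of $p,q$ with respect to the valuation $v_{\boldsymbol\alpha}$ equals the formal combination $$\sum_{i=0}^{n-1}\Big(\frac1{1+\alpha_i}-\frac1{1+\alpha_{i+1}}\Big)\big((p\vee_L^iq)+(p\vee_R^iq)\big)+\frac{1-\alpha_n}{1+\alpha_n}(p\sqcup^nq)$$ (coefficients of equal elements added).
   Context: $\mathcal{S}_2=\{-,0,+\}$ with minimum $0$ and incomparable $-,+$; $\mathcal{S}_2^n$ has the componentwise order. Operations on $\mathcal{S}_2$: $x\sqcup y$ is the larger of $x,y$ if comparable and $0$ if $\{x,y\}=\{-,+\}$; $x\sqcup_+y=+$ if $\{x,y\}=\{-,+\}$, else $x\sqcup y$; $x\vee_Ly=x$ if $x\ne0$ and $y$ if $x=0$; $x\vee_Ry=y$ if $y\ne0$ and $x$ if $y=0$. For $i=0,\dots,n$: $\sqcup^i,\vee_L^i,\vee_R^i$ apply $\sqcup_+$ in the first $i$ coordinates and respectively $\sqcup,\vee_L,\vee_R$ in the remaining coordinates. Valuation: $v_i(0)=0,v_i(+)=1,v_i(-)=\alpha_i$, $v_{\boldsymbol\alpha}(x)=\sum_iv_i(x_i)$. Fractional join w.r.t. $v=v_{\boldsymbol\alpha}$: $I(p,q)$ is the set of elements on shortest $p$–$q$ paths of the covering graph; $v(u;p,q)=(v(u\wedge p)-v(p\wedge q),v(u\wedge q)-v(p\wedge q))$ ($\wedge$ = meet); $\mathcal{E}(p,q)$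 the $u\in I(p,q)$ with $v(u;p,q)$ a componentwise-maximal extreme point of the convex hull $\mathrm{Conv}I(p,q)$; $C(u;p,q)=\{w\in\mathbf{R}^2_{\ge0}:\langle w,v(u;p,q)\rangle=\max_{z\in\mathrm{Conv}I(p,q)}\langle w,z\rangle\}=\{(x,y)\ge0:y\cos\alpha\le x\sin\alpha,\ y\cos\beta\ge x\sin\beta\}$ ($0\le\beta\le\alpha\le\pi/2$), $[C]=\frac{\sin\alpha}{\sin\alpha+\cos\alpha}-\frac{\sin\beta}{\sin\beta+\cos\beta}$; the fractional join is $\sum_{u\in\mathcal{E}(p,q)}[C(u;p,q)]u$. *)

From HB Require Import structures.
From mathcomp Require Import all_boot all_order all_algebra.
From mathcomp Require Import boolp classical_sets reals trigo.
Set Implicit Arguments. Unset Strict Implicit. Unset Printing Implicit Defensive.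
Import Order.TTheory GRing.Theory Num.Theory.
Local Open Scope ring_scope.

Inductive S2 := Mi | Ze | Pl.

Definition S2_to_o (x : S2) : 'I_3 :=
  match x with Mi => inord 0 | Ze => inord 1 | Pl => inord 2 end.
Definition o_to_S2 (i : 'I_3) : S2 :=
  match val i with 0 => Mi | 1 => Ze | _ => Pl end.
Lemma S2_toK : cancel S2_to_o o_to_S2.
Proof. by case; rewrite /o_to_S2 /= inordK. Qed.
HB.instance Definition _ := Finite.copy S2 (can_type S2_toK).

Definition le1 (a b : S2) : bool := (a == Ze) || (a == b).

Definition S2n (n : nat) := {ffun 'I_n -> S2}.

Definition leS (n : nat) (x y : S2n n) : bool := [forall i, le1 (x i) (y i)].
Definition ltS (n : nat) (x y : S2n n) : bool := (x != y) && leS x y.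

Definition covers (n : nat) (x y : S2n n) : bool :=
  ltS x y && [forall z : S2n n, ~~ (ltS x z && ltS z y)].
Definition adj (n : nat) (x y : S2n n) : bool := covers x y || covers y x.

(* s is (the tail of) a walk from p to q in the covering graph, of length size s *)
Definition walk (n : nat) (p q : S2n n) (s : seq (S2n n)) : bool :=
  path (@adj n) p s && (last p s == q).

Definition Iset (n : nat) (p q : S2n n) (u : S2n n) : Prop :=
  exists s, [/\ walk p q s, u \in p :: s &
    forall s', walk p q s' -> (size s <= size s')%N].

Definition meet1 (a b : S2) : S2 := if a == b then a else Ze.
Definition meetS (n : nat) (x y : S2n n) : S2n n := [ffun i => meet1 (x i) (y i)].

Definition sqcup1 (a b : S2) : S2 :=
  if le1 a b then b else if le1 b a then a else Ze.
Definition sqcupP1 (a b : S2) : S2 :=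
  if ((a == Mi) && (b == Pl)) || ((a == Pl) && (b == Mi)) then Pl else sqcup1 a b.
Definition veeL1 (a b : S2) : S2 := if a != Ze then a else b.
Definition veeR1 (a b : S2) : S2 := if b != Ze then b else a.

Definition sqcupI (n i : nat) (p q : S2n n) : S2n n :=
  [ffun j : 'I_n => if (j < i)%N then sqcupP1 (p j) (q j) else sqcup1 (p j) (q j)].
Definition veeLI (n i : nat) (p q : S2n n) : S2n n :=
  [ffun j : 'I_n => if (j < i)%N then sqcupP1 (p j) (q j) else veeL1 (p j) (q j)].
Definition veeRI (n i : nat) (p q : S2n n) : S2n n :=
  [ffun j : 'I_n => if (j < i)%N then sqcupP1 (p j) (q j) else veeR1 (p j) (q j)].

Section Real.
Variable R : realType.

Definition alph (alpha : nat -> R) (k : nat) : R := if k == 0%N then 0 else alpha k.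

(* valuation: coordinate j : 'I_n (the (j+1)-th coordinate) uses alpha_(j+1) *)
Definition val1 (alpha : nat -> R) (j : nat) (a : S2) : R :=
  match a with Ze => 0 | Pl => 1 | Mi => alpha j.+1 end.
Definition valu (n : nat) (alpha : nat -> R) (x : S2n n) : R :=
  \sum_(j < n) val1 alpha j (x j).

Definition vpt (n : nat) (alpha : nat -> R) (p q u : S2n n) : R * R :=
  (valu alpha (meetS u p) - valu alpha (meetS p q),
   valu alpha (meetS u q) - valu alpha (meetS p q)).

Definition convI (n : nat) (alpha : nat -> R) (p q : S2n n) (z : R * R) : Prop :=
  exists lam : S2n n -> R,
    [/\ forall u, 0 <= lam u,
        forall u, ~ Iset p q u -> lam u = 0,
        \sum_u lam u = 1 &
        z = (\sum_u lam u * (vpt alpha p q u).1, \sum_u lam u * (vpt alpha p q u).2)].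

Definition extreme_pt (K : R * R -> Prop) (z : R * R) : Prop :=
  K z /\ forall x y (t : R), K x -> K y -> 0 < t < 1 ->
    z = (t * x.1 + (1 - t) * y.1, t * x.2 + (1 - t) * y.2) -> x = y.

Definition cw_maximal (K : R * R -> Prop) (z : R * R) : Prop :=
  K z /\ forall z', K z' -> z.1 <= z'.1 -> z.2 <= z'.2 -> z' = z.

Definition Eset (n : nat) (alpha : nat -> R) (p q u : S2n n) : Prop :=
  Iset p q u /\ extreme_pt (convI alpha p q) (vpt alpha p q u)
             /\ cw_maximal (convI alpha p q) (vpt alpha p q u).

Definition dotp (w z : R * R) : R := w.1 * z.1 + w.2 * z.2.

Definition Ccone (n : nat) (alpha : nat -> R) (p q u : S2n n) (w : R * R) : Prop :=
  [/\ 0 <= w.1, 0 <= w.2, convI alpha p q (vpt alpha p q u) &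
      forall z, convI alpha p q z -> dotp w z <= dotp w (vpt alpha p q u)].

Definition angle_cone (a b : R) (w : R * R) : Prop :=
  [/\ 0 <= w.1, 0 <= w.2, w.2 * cos a <= w.1 * sin a & w.2 * cos b >= w.1 * sin b].

Definition cone_meas (C : R * R -> Prop) : R :=
  xget 0 [set m | exists a b : R, [/\ 0 <= b, b <= a, a <= pi / 2,
     C = angle_cone a b &
     m = sin a / (sin a + cos a) - sin b / (sin b + cos b)]].

(* the fractional join, as a formal combination (coefficient function) *)
Definition frac_join (n : nat) (alpha : nat -> R) (p q : S2n n) : S2n n -> R :=
  fun x => if `[< Eset alpha p q x >] then cone_meas (Ccone alpha p q x) else 0.

Definition rhs_comb (n : nat) (alpha : nat -> R) (p q : S2n n) : S2n n -> R :=
  fun x =>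
    \sum_(i < n) ((1 + alph alpha i)^-1 - (1 + alph alpha i.+1)^-1) *
        ((veeLI i p q == x)%:R + (veeRI i p q == x)%:R)
    + (1 - alph alpha n) / (1 + alph alpha n) * (sqcupI n p q == x)%:R.

End Real.

From Pilot Require Import Defs.
From HB Require Import structures.
From mathcomp Require Import all_boot all_order all_algebra.
From mathcomp Require Import boolp classical_sets reals trigo.
From mathcomp Require Import zify ring lra.
Import Order.TTheory GRing.Theory Num.Theory.
Set Implicit Arguments. Unset Strict Implicit. Unset Printing Implicit Defensive.

(* Distances in the covering graph of S_2^n add up over the coordinates, with
   d(-,+) = 2 since - and + are joined only through 0.  Hence I(p,q) is the
   product of the coordinatewise intervals and every functional
   <w, v(.;p,q)> is separable.  Parametrise the directions w >= 0 by their
   slope s = w_2 / (w_1 + w_2) in [0,1]: a coordinate value x_j is optimal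
   exactly for the slopes of an interval whose ends lie in {0, 1, A_j, B_j},
   where A_j = a_j / (1 + a_j) and B_j = 1 / (1 + a_j) are the slopes at which
   - and + tie.  So the normal cone C(x;p,q) is the sector L(x) <= s <= U(x),
   [C] = max(0, U - L), and x is an extreme, componentwise maximal point
   exactly when L < U.  The breakpoints
   0 = A_0 <= ... <= A_n <= 1/2 <= B_n <= ... <= B_0 = 1 cut [0,1] into
   intervals on each of which a single element is optimal: p vee_L^k q on
   [A_k, A_(k+1)], p sqcup^n q on [A_n, B_n] and p vee_R^k q on
   [B_(k+1), B_k].  Summing the lengths of those inside [L(x), U(x)] gives
   [C(x;p,q)], the coefficient of x on the right-hand side. *)

(* Equality on S2 comes from a copied finType structure and does not compute. *)
Lemma S2_eqE (a b : S2) : (a == b) =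
  match a, b with Mi, Mi | Ze, Ze | Pl, Pl => true | _, _ => false end.
Proof.
case: a; case: b => //=; try exact: eqxx; apply/eqP => /(congr1 (val \o S2_to_o)).
all: by rewrite /= !inordK.
Qed.

Definition dist1 (a b : S2) : nat :=
  match a, b with
  | Mi, Mi | Ze, Ze | Pl, Pl => 0
  | Mi, Pl | Pl, Mi => 2
  | _, _ => 1
  end.

Lemma dist1_triangle a b c : dist1 a c <= dist1 a b + dist1 b c.
Proof. by case: a; case: b; case: c. Qed.

Lemma dist1C a b : dist1 a b = dist1 b a.
Proof. by case: a; case: b. Qed.

Lemma dist1_eq0 a b : dist1 a b = 0 -> a = b.
Proof. by case: a; case: b. Qed.

Definition between1 (p q u : S2) : bool := dist1 p u + dist1 u q == dist1 p q.

Section Geodesics.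
Variable n : nat.
Implicit Types (x y z p q u : S2n n) (s : seq (S2n n)).

Definition dist x y : nat := \sum_j dist1 (x j) (y j).

Lemma dist_triangle x y z : dist x z <= dist x y + dist y z.
Proof. by rewrite /dist -big_split; apply: leq_sum => j _; apply: dist1_triangle. Qed.

Lemma distC x y : dist x y = dist y x.
Proof. by apply: eq_bigr => j _; rewrite dist1C. Qed.

Lemma distxx x : dist x x = 0.
Proof. by apply: big1 => j _; case: (x j). Qed.

Lemma dist_eq0 x y : dist x y = 0 -> x = y.
Proof.
move/eqP; rewrite /dist sum_nat_eq0 => /forallP dx0.
by apply/ffunP => j; apply/dist1_eq0/eqP/dx0.
Qed.

Lemma exists_coord_neq x y : x != y -> exists j, x j != y j.
Proof.
move=> xy; apply/existsP; apply: contraNT xy => /existsPn xy.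
by apply/eqP/ffunP => j; apply/eqP; move: (xy j); rewrite negbK.
Qed.

Definition set_coord x j a : S2n n := [ffun i => if i == j then a else x i].

Lemma set_coordE x j a i : set_coord x j a i = if i == j then a else x i.
Proof. by rewrite ffunE. Qed.

Lemma big_set_coord (V : Type) (idx : V) (op : Monoid.com_law idx)
    (F : 'I_n -> S2 -> V) x j a :
  \big[op/idx]_i F i (set_coord x j a i) =
  op (F j a) (\big[op/idx]_(i | i != j) F i (x i)).
Proof.
rewrite (bigD1 j) //= set_coordE eqxx; congr (op _ _).
by apply: eq_bigr => i ij; rewrite set_coordE (negbTE ij).
Qed.

Definition height x : nat := \sum_j (x j != Ze).

Lemma ltS_height x y : ltS x y -> height x < height y.
Proof.
case/andP => /exists_coord_neq [j xyj] /forallP le_xy.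
rewrite /height (bigD1 j) //= [X in _ < X](bigD1 j) //=.
have : \sum_(i | i != j) (x i != Ze) <= \sum_(i | i != j) (y i != Ze).
  apply: leq_sum => i _.
  by move: (le_xy i); rewrite /le1 !S2_eqE; case: (x i); case: (y i).
by move: (le_xy j) xyj; rewrite /le1 !S2_eqE; case: (x j); case: (y j) => //= _ _; lia.
Qed.

Lemma covers_set_coord x j a : x j = Ze -> a != Ze -> covers x (set_coord x j a).
Proof.
move=> xj0 a0; have lt_x : ltS x (set_coord x j a).
  apply/andP; split.
    apply/eqP => /ffunP /(_ j); rewrite set_coordE eqxx xj0 => a0E.
    by rewrite a0E eqxx in a0.
  apply/forallP => i; rewrite set_coordE /le1.
  by case: (i =P j) => [->|_]; rewrite /= ?xj0 ?eqxx ?orbT.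
apply/andP; split=> //; apply/forallP => z.
apply/negP => /andP [/ltS_height xz /ltS_height zx].
have : height (set_coord x j a) = (height x).+1.
  rewrite /height (big_set_coord _ (fun _ b => nat_of_bool (b != Ze))).
  by rewrite [in RHS](bigD1 j) //= xj0 a0 eqxx.
lia.
Qed.

Lemma covers_dist x y : covers x y -> dist x y <= 1.
Proof.
case/andP => /andP [/exists_coord_neq [j xyj] /forallP le_xy] /forallP cover.
have other_eq i : i != j -> x i = y i.
  move=> ij; apply/eqP/negPn/negP => xyi.
  have /negP := cover (set_coord x j (y j)); apply; apply/andP; split; apply/andP; split.
  - by apply/eqP => /ffunP /(_ j); rewrite set_coordE eqxx => E; rewrite E eqxx in xyj.
  - apply/forallP => l; rewrite set_coordE.
    by case: (l =P j) => [->|_] /=; [exact: le_xy | rewrite /le1 eqxx orbT].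
  - by apply/eqP => /ffunP /(_ i); rewrite set_coordE (negbTE ij) => E; rewrite E eqxx in xyi.
  - apply/forallP => l; rewrite set_coordE.
    by case: (l =P j) => [->|_] /=; [rewrite /le1 eqxx orbT | exact: le_xy].
rewrite /dist (bigD1 j) //= big1 => [|i ij]; last by rewrite other_eq //; case: (y i).
by move: (le_xy j) xyj; rewrite /le1 !S2_eqE; case: (x j); case: (y j).
Qed.

Lemma adj_dist x y : adj x y -> dist x y <= 1.
Proof. by case/orP => /covers_dist; rewrite // distC. Qed.

Lemma walk_dist x y s : walk x y s -> dist x y <= size s.
Proof.
elim: s x => [|z s IHs] x /andP [/= xs /eqP lst]; first by rewrite -lst distxx.
case/andP: xs => xz zs; have := IHs z; rewrite /walk zs lst eqxx => /(_ isT).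
by have := dist_triangle x z y; have := adj_dist xz; lia.
Qed.

Lemma dist_set_coord x y j : x j != y j ->
  (dist (set_coord x j (if x j == Ze then y j else Ze)) y).+1 = dist x y.
Proof.
move=> xyj; rewrite /dist (big_set_coord _ (fun i a => dist1 a (y i))).
rewrite [in RHS](bigD1 j) //=.
by move: xyj; rewrite !S2_eqE; case: (x j); case: (y j) => //= _; lia.
Qed.

Lemma walk_of_dist x y : exists2 s, walk x y s & size s = dist x y.
Proof.
move dxy : (dist x y) => k; elim: k x dxy => [|k IHk] x dxy.
  by exists [::]; rewrite // /walk /= (dist_eq0 dxy).
have /exists_coord_neq [j xyj] : x != y by apply: contra_eqN dxy => /eqP ->; rewrite distxx.
set x' := set_coord x j (if x j == Ze then y j else Ze).
have [s /andP [x's /eqP <-] <-] : exists2 s, walk x' y s & size s = k.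
  by apply: IHk; have := dist_set_coord xyj; rewrite dxy => -[].
exists (x' :: s) => //; rewrite /walk /= x's eqxx !andbT.
case: (boolP (x j == Ze)) => xj0; apply/orP; [left | right].
  by rewrite /x' xj0; apply: covers_set_coord; [exact/eqP | rewrite -(eqP xj0) eq_sym].
have -> : x = set_coord x' j (x j).
  by apply/ffunP => i; rewrite !set_coordE; case: eqP => [->|].
by rewrite /x' (negbTE xj0); apply: covers_set_coord; rewrite ?set_coordE ?eqxx.
Qed.

Definition between p q u : bool := [forall j, between1 (p j) (q j) (u j)].

Lemma dist_between p q u : between p q u -> dist p u + dist u q = dist p q.
Proof.
move/forallP => puq; rewrite /dist -big_split.
by apply: eq_bigr => j _; apply/eqP/puq.
Qed.

Lemma between_of_dist p q u : dist p u + dist u q <= dist p q -> between p q u.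
Proof.
move=> le_pq.
have : \sum_j dist1 (p j) (q j) == \sum_j (dist1 (p j) (u j) + dist1 (u j) (q j)).
  by rewrite big_split -/(dist p u) -/(dist u q) -/(dist p q) eqn_leq dist_triangle.
rewrite (leqif_sum (fun j _ => leqif_eq (dist1_triangle (p j) (u j) (q j)))).2.
move/forallP => eq_pq; apply/forallP => j.
by rewrite /between1 eq_sym; exact: eq_pq j.
Qed.

Lemma IsetP p q u : Iset p q u <-> between p q u.
Proof.
split=> [[s [pqs us s_min]] | puq].
- apply: between_of_dist; have [s0 pqs0 <-] := walk_of_dist p q.
  case/splitPl: us pqs s_min => s1 s2 lst1.
  rewrite /walk cat_path last_cat lst1 => /andP [/andP [ps1 us2] uq] s_min.
  apply: leq_trans (s_min _ pqs0); rewrite size_cat leq_add //.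
    by apply: walk_dist; rewrite /walk ps1 lst1 eqxx.
  by apply: walk_dist; rewrite /walk us2 uq.
- have [s1 /andP [ps1 /eqP lst1] s1E] := walk_of_dist p u.
  have [s2 /andP [us2 lst2] s2E] := walk_of_dist u q.
  exists (s1 ++ s2); split.
  + by rewrite /walk cat_path last_cat lst1 ps1 us2 lst2.
  + by rewrite -cat_cons mem_cat -lst1 mem_last.
  + by move=> s' /walk_dist; rewrite size_cat s1E s2E dist_between.
Qed.
End Geodesics.

Local Open Scope ring_scope.

Section Slopes.
Variable R : realType.
Implicit Types (a b c s t L U : R).

Lemma frac_mix_le b c (w1 w2 : R) : 0 < c ->
  (b / c * (w1 + w2) <= w2) = (b * w1 <= (c - b) * w2).
Proof.
move=> c_gt0; rewrite -subr_le0 -[RHS]subr_le0.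
have -> : b / c * (w1 + w2) - w2 = (b * w1 - (c - b) * w2) / c by field; lra.
by rewrite pmulr_lle0 ?invr_gt0.
Qed.

Lemma le_frac_mix b c (w1 w2 : R) : 0 < c ->
  (w2 <= b / c * (w1 + w2)) = ((c - b) * w2 <= b * w1).
Proof.
move=> c_gt0; rewrite -subr_le0 -[RHS]subr_le0.
have -> : w2 - b / c * (w1 + w2) = ((c - b) * w2 - b * w1) / c by field; lra.
by rewrite pmulr_lle0 ?invr_gt0.
Qed.

Definition sector L U (w : R * R) : Prop :=
  [/\ 0 <= w.1, 0 <= w.2, L * (w.1 + w.2) <= w.2 & w.2 <= U * (w.1 + w.2)].

Lemma sector_slope L U s : 0 <= s <= 1 -> sector L U (1 - s, s) <-> L <= s <= U.
Proof.
move=> /andP [s_ge0 s_le1]; rewrite /sector /= subrK !mulr1.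
by split=> [[_ _ -> ->] | /andP [Ls sU]] //; split; rewrite ?subr_ge0.
Qed.

Lemma sector_inj L U L' U' :
  0 <= L <= 1 -> 0 <= U <= 1 -> 0 <= L' <= 1 -> 0 <= U' <= 1 -> L' <= U' ->
  sector L U = sector L' U' -> L = L' /\ U = U'.
Proof.
move=> L01 U01 L'01 U'01 LU' E.
have same s : 0 <= s <= 1 -> (L <= s <= U) = (L' <= s <= U').
  move=> s01; apply/idP/idP => /(sector_slope _ _ s01) H; apply/(sector_slope _ _ s01).
    by rewrite -E.
  by rewrite E.
have /andP [LL' L'U] : L <= L' <= U by rewrite same // lexx LU'.
have /andP [_ U'U] : L <= U' <= U by rewrite same // lexx LU'.
have /andP [L'L _] : L' <= L <= U' by rewrite -same // lexx (le_trans LL' L'U).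
have /andP [_ UU'] : L' <= U <= U' by rewrite -same // lexx (le_trans LL' L'U).
by split; apply/eqP; rewrite eq_le ?LL' ?L'L ?UU' ?U'U.
Qed.

Definition angle_slope a := sin a / (sin a + cos a).

Lemma sin_cos_quadrant a : 0 <= a <= pi / 2 ->
  [/\ 0 <= sin a, 0 <= cos a & 0 < sin a + cos a].
Proof.
move=> /andP [a_ge0 a_le]; have pi_gt0 := pi_gt0 R.
have sin_ge0 : 0 <= sin a by apply: sin_ge0_pi; apply/andP; split; lra.
have cos_ge0 : 0 <= cos a by apply: cos_ge0_pihalf; apply/andP; split; lra.
by have := cos2Dsin2 a; split => //; nra.
Qed.

Lemma angle_slope01 a : 0 <= a <= pi / 2 -> 0 <= angle_slope a <= 1.
Proof.
move=> /sin_cos_quadrant [sa ca sca].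
by rewrite divr_ge0 ?ler_pdivrMr ?addr_ge0 //= mul1r lerDl.
Qed.

Lemma angle_cone_sector a b : 0 <= a <= pi / 2 -> 0 <= b <= pi / 2 ->
  angle_cone a b = sector (angle_slope b) (angle_slope a).
Proof.
move=> /sin_cos_quadrant [_ _ sca] /sin_cos_quadrant [_ _ scb].
apply/funext => -[w1 w2]; apply/propext.
rewrite /angle_cone /sector /angle_slope /= frac_mix_le // le_frac_mix //.
by split=> -[? ? ? ?]; split=> //; lra.
Qed.

Lemma angle_slope_le a b : 0 <= b -> b <= a -> a <= pi / 2 ->
  angle_slope b <= angle_slope a.
Proof.
move=> b_ge0 ba a_le; have pi_gt0 := pi_gt0 R.
have [_ _ sca] : [/\ 0 <= sin a, 0 <= cos a & 0 < sin a + cos a].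
  by apply: sin_cos_quadrant; rewrite a_le (le_trans b_ge0 ba).
have [_ _ scb] : [/\ 0 <= sin b, 0 <= cos b & 0 < sin b + cos b].
  by apply: sin_cos_quadrant; rewrite b_ge0 (le_trans ba a_le).
have sin_ab : 0 <= sin (a - b) by apply: sin_ge0_pi; apply/andP; split; lra.
have -> : angle_slope a = angle_slope b + sin (a - b) / ((sin a + cos a) * (sin b + cos b)).
  by rewrite sinB /angle_slope; field; lra.
by rewrite lerDl divr_ge0 // mulr_ge0 // ltW.
Qed.

Lemma angle_slope_surj s : 0 <= s <= 1 ->
  exists2 a, 0 <= a <= pi / 2 & angle_slope a = s.
Proof.
move=> /andP [s_ge0 s_le1]; have pi_gt0 := pi_gt0 R.
have [->|s_neq1] := eqVneq s 1.
  exists (pi / 2); first by apply/andP; split; lra.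
  by rewrite /angle_slope sin_pihalf cos_pihalf addr0 divr1.
have s_lt1 : s < 1 by rewrite lt_neqAle s_neq1.
exists (atan (s / (1 - s))).
  rewrite (ltW (atan_ltpi2 _)) andbT -atan0 le_atan //.
  by rewrite divr_ge0 // subr_ge0.
have cos_gt0 : 0 < cos (atan (s / (1 - s))).
  by apply: cos_gt0_pihalf; rewrite atan_gtNpi2 atan_ltpi2.
rewrite /angle_slope; set t := s / (1 - s) in cos_gt0 *.
have -> : sin (atan t) = t * cos (atan t).
  by rewrite -[t in _ = t * _](atanK t) /tan divfK // gt_eqF.
rewrite /t; field.
by repeat (apply/andP; split); apply/lt0r_neq0; nra.
Qed.

Lemma cone_meas_sector L U : 0 <= L <= 1 -> 0 <= U <= 1 ->
  cone_meas (sector L U) = Num.max 0 (U - L).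
Proof.
move=> L01 U01; have pi_gt0 := pi_gt0 R.
have angles_of a b : 0 <= b -> b <= a -> a <= pi / 2 -> sector L U = angle_cone a b ->
    [/\ L <= U, L = angle_slope b & U = angle_slope a].
  move=> b_ge0 ba a_le E.
  have a01 : 0 <= a <= pi / 2 by rewrite a_le (le_trans b_ge0 ba).
  have b01 : 0 <= b <= pi / 2 by rewrite b_ge0 (le_trans ba a_le).
  have ab := angle_slope_le b_ge0 ba a_le.
  by have [-> ->] := sector_inj L01 U01 (angle_slope01 b01) (angle_slope01 a01) ab
    (etrans E (angle_cone_sector a01 b01)).
rewrite /cone_meas; case: (leP L U) => [LU | UL].
- rewrite max_r ?subr_ge0 //.
  have [a a01 aU] := angle_slope_surj U01.
  have [b b01 bL] : exists2 b, 0 <= b <= a & angle_slope b = L.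
    have [b0 /andP [b0_ge0 b0_le] b0L] := angle_slope_surj L01.
    case/andP: a01 => a_ge0 a_le.
    case: (leP b0 a) => [b0a | ab0]; first by exists b0; rewrite ?b0_ge0.
    exists a; first by rewrite lexx a_ge0.
    by apply/eqP; rewrite eq_le -{1}b0L angle_slope_le ?(ltW ab0) //= aU LU.
  have [b_ge0 ba] := andP b01.
  have b01' : 0 <= b <= pi / 2 by rewrite b_ge0 (le_trans ba) //; case/andP: a01.
  apply: xget_unique.
    exists a, b; split=> //; first by case/andP: a01.
      by rewrite angle_cone_sector // aU bL.
    by rewrite -aU -bL.
  move=> m [a' [b' [b'_ge0 b'a' a'_le E ->]]].
  by have [_ -> ->] := angles_of a' b' b'_ge0 b'a' a'_le E.
- rewrite max_l ?subr_le0 ?ltW //; apply: xgetPN => m [a' [b' [b'_ge0 b'a' a'_le E _]]].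
  by have [] := angles_of a' b' b'_ge0 b'a' a'_le E; rewrite leNgt UL.
Qed.

Lemma convex_comb_max t A B C : 0 < t < 1 -> A <= C -> B <= C ->
  t * A + (1 - t) * B = C -> A = C /\ B = C.
Proof. by move=> /andP [t_gt0 t_lt1] AC BC E; split; nra. Qed.

Lemma extreme_cw_maximal_of_slopes (K : R * R -> Prop) (z : R * R) s1 s2 :
  0 < s1 -> s1 < s2 -> s2 < 1 -> K z ->
  (forall v, K v -> dotp (1 - s1, s1) v <= dotp (1 - s1, s1) z) ->
  (forall v, K v -> dotp (1 - s2, s2) v <= dotp (1 - s2, s2) z) ->
  extreme_pt K z /\ cw_maximal K z.
Proof.
move=> s1_gt0 s12 s2_lt1 Kz z_max1 z_max2.
have on_both_faces v : dotp (1 - s1, s1) v = dotp (1 - s1, s1) z ->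
    dotp (1 - s2, s2) v = dotp (1 - s2, s2) z -> v = z.
  case: v z {Kz z_max1 z_max2} => [v1 v2] [z1 z2]; rewrite /dotp /= => e1 e2.
  have : (s2 - s1) * ((v2 - z2) - (v1 - z1)) = 0 by lra.
  move/eqP; rewrite mulf_eq0 subr_eq0 gt_eqF //= subr_eq0 => /eqP d21.
  have v2E : v2 = v1 - z1 + z2 by lra.
  have v1z1 : v1 = z1 by rewrite v2E in e1; lra.
  by rewrite v2E v1z1 subrr add0r.
split; split=> //; [move=> x y t Kx Ky t01 zE | move=> z' Kz' z1_le z2_le].
- have face s : (forall v, K v -> dotp (1 - s, s) v <= dotp (1 - s, s) z) ->
      dotp (1 - s, s) x = dotp (1 - s, s) z /\ dotp (1 - s, s) y = dotp (1 - s, s) z.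
    move=> z_max; apply: convex_comb_max t01 (z_max _ Kx) (z_max _ Ky) _.
    by rewrite zE /dotp /=; ring.
  have [x1 y1] := face _ z_max1; have [x2 y2] := face _ z_max2.
  by rewrite (on_both_faces x) // (on_both_faces y).
- move: (z_max1 _ Kz') z1_le z2_le.
  case: z' z {Kz' z_max1 z_max2 Kz on_both_faces} => [v1 v2] [z1 z2].
  rewrite /dotp /= => le_z z1_le z2_le.
  have s1_lt1 : s1 < 1 by lra.
  have dv1_ge0 : 0 <= (1 - s1) * (v1 - z1) by apply: mulr_ge0; lra.
  have dv2_ge0 : 0 <= s1 * (v2 - z2) by apply: mulr_ge0; lra.
  have /eqP : (1 - s1) * (v1 - z1) = 0 by lra.
  rewrite mulf_eq0 subr_eq0 (gt_eqF s1_lt1) subr_eq0 => /eqP ->.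
  have /eqP : s1 * (v2 - z2) = 0 by lra.
  by rewrite mulf_eq0 (gt_eqF s1_gt0) subr_eq0 => /eqP ->.
Qed.
End Slopes.

Lemma step_homo_le (R : realType) (e : nat -> R) (m : nat) :
  (forall k, (k < m)%N -> e k <= e k.+1) ->
  forall i j, (i <= j)%N -> (j <= m)%N -> e i <= e j.
Proof.
move=> e_step i j ij jm.
have : {in [pred k | (k <= m)%N] &, {homo e : i j / (i <= j)%N >-> (i <= j)%R}}.
  apply: homo_leq_in => [x | y x z | i' j' _ /[!inE] j'm k /andP [_ kj] | k _ km].
  - exact: lexx.
  - exact: le_trans.
  - by rewrite inE ltnW // (leq_trans kj j'm).
  - exact: e_step.
by apply; rewrite ?inE // (leq_trans ij).
Qed.

Lemma telescope_window (R : realType) (e : nat -> R) (m kL kU : nat) :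
  (forall k, (k < m)%N -> e k <= e k.+1) -> (kL <= m)%N -> (kU <= m)%N ->
  \sum_(0 <= k < m) (e k.+1 - e k) * ((e kL <= e k) && (e k.+1 <= e kU))%:R =
  Num.max 0 (e kU - e kL).
Proof.
move=> e_step kLm kUm.
have e_le := step_homo_le e_step.
have window k : (k < m)%N ->
    (e k.+1 - e k) * ((e kL <= e k) && (e k.+1 <= e kU))%:R =
    (e k.+1 - e k) * ((kL <= k < kU)%N)%:R.
  move=> km; have [e_eq | e_lt] := eqVneq (e k) (e k.+1).
    by rewrite e_eq subrr !mul0r.
  have {e_lt} e_lt : e k < e k.+1 by rewrite lt_neqAle e_lt e_step.
  congr (_ * (nat_of_bool _)%:R); congr andb.
    case: (leqP kL k) => [Lk | kL_gt]; first by rewrite e_le // ltnW.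
    by apply/negbTE; rewrite -ltNge (lt_le_trans e_lt) // e_le.
  case: (ltnP k kU) => [kU_gt | Uk]; first by rewrite e_le.
  by apply/negbTE; rewrite -ltNge (le_lt_trans _ e_lt) // e_le // ltnW.
rewrite (eq_big_nat _ _ (fun k km => window k (andP km).2)).
case: (leqP kL kU) => [LU | UL].
  rewrite max_r ?subr_ge0 ?e_le // -(telescope_sumr e LU).
  rewrite [RHS](big_nat_widenl _ 0) // [RHS](big_nat_widen _ _ m) // [RHS]big_mkcond /=.
  by apply: eq_bigr => k _; rewrite mulr_natr mulrb.
rewrite max_l ?subr_le0 ?e_le ?(ltnW UL) // big1 // => k _.
have : ~~ (kL <= k < kU)%N by apply/andP => -[Lk kU_gt]; lia.
by move/negbTE ->; rewrite mulr0.
Qed.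

Lemma forall_S2 (P : S2 -> Prop) : (forall y, P y) = [/\ P Mi, P Ze & P Pl].
Proof. by apply: propext; split=> [|[? ? ?] []]. Qed.

Lemma implyTp (P : Prop) : (true -> P) = P.
Proof. by apply: propext; split=> [/(_ isT) | ]. Qed.

Lemma implyFp (P : Prop) : (false -> P) = True.
Proof. by apply: propext. Qed.

Section Coordinates.
Variable R : realType.
Implicit Types (a s : R) (w : R * R).

Lemma bigmax_mulr_le (I : finType) (f : I -> R) s (c : R) : 0 <= s -> 0 <= c ->
  (\big[Num.max/0]_i f i) * s <= c <-> forall i, f i * s <= c.
Proof.
move=> s_ge0 c_ge0; split=> [le_c i | le_c].
  by apply: le_trans le_c; rewrite ler_wpM2r // le_bigmax.
apply: (big_ind (fun m => m * s <= c)) => //; first by rewrite mul0r.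
by move=> x y xc yc; rewrite maxEle; case: ifP.
Qed.

Lemma le_bigmin_mulr (I : finType) (f : I -> R) s (c : R) : 0 <= s -> c <= s ->
  c <= (\big[Num.min/1]_i f i) * s <-> forall i, c <= f i * s.
Proof.
move=> s_ge0 c_le; split=> [le_c i | le_c].
  by apply: le_trans le_c _; rewrite ler_wpM2r // bigmin_le.
apply: (big_ind (fun m => c <= m * s)) => //; first by rewrite mul1r.
by move=> x y xc yc; rewrite minEle; case: ifP.
Qed.

(* The slopes at which - and + tie in a coordinate where (p_j, q_j) is (-, +),
   resp. (+, -). *)
Definition cutMP a := a / (1 + a).
Definition cutPM a := 1 / (1 + a).

(* In a coordinate where x lies between p and q, x is optimal exactly for the
   slopes in [slope_lo1 a p q x, slope_hi1 a p q x] (for no direction w != 0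
   when the bounds cross). *)
Definition slope_lo1 a (p q x : S2) : R :=
  match p, q, x with
  | Mi, Pl, Pl => cutMP a
  | Pl, Mi, Mi => cutPM a
  | Mi, Pl, Ze | Pl, Mi, Ze | Mi, Ze, Ze | Pl, Ze, Ze => 1
  | _, _, _ => 0
  end.

Definition slope_hi1 a (p q x : S2) : R :=
  match p, q, x with
  | Mi, Pl, Mi => cutMP a
  | Pl, Mi, Pl => cutPM a
  | Mi, Pl, Ze | Pl, Mi, Ze | Ze, Mi, Ze | Ze, Pl, Ze => 0
  | _, _, _ => 1
  end.

Lemma slope_lo1_cases a p q x : slope_lo1 a p q x \in [:: 0; 1; cutMP a; cutPM a].
Proof. by case: p; case: q; case: x; rewrite !inE eqxx ?orbT. Qed.

Lemma slope_hi1_cases a p q x : slope_hi1 a p q x \in [:: 0; 1; cutMP a; cutPM a].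
Proof. by case: p; case: q; case: x; rewrite !inE eqxx ?orbT. Qed.

Lemma cutPM_le a b : 0 <= a -> a <= b -> cutPM b <= cutPM a.
Proof. by move=> a_ge0 ab; rewrite /cutPM !div1r lef_pV2 ?posrE ?lerD2l //; lra. Qed.

Lemma cutMPE a : 0 <= a -> cutMP a = 1 - cutPM a.
Proof. by move=> a_ge0; rewrite /cutMP /cutPM; field; lra. Qed.

Lemma cutMP_le a b : 0 <= a -> a <= b -> cutMP a <= cutMP b.
Proof.
move=> a_ge0 ab; rewrite !cutMPE ?(le_trans a_ge0) // lerD2l lerN2.
exact: cutPM_le.
Qed.

Lemma half_le_cutPM a : 0 <= a -> a <= 1 -> 2^-1 <= cutPM a.
Proof. by move=> a_ge0 a_le1; rewrite /cutPM div1r lef_pV2 ?posrE //; lra. Qed.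

Lemma cutMP_le_half a : 0 <= a -> a <= 1 -> cutMP a <= 2^-1.
Proof. by move=> a_ge0 a_le1; have := half_le_cutPM a_ge0 a_le1; rewrite cutMPE //; lra. Qed.

Lemma cutMP_ge0 a : 0 <= a -> 0 <= cutMP a.
Proof. by move=> a_ge0; rewrite divr_ge0 // addr_ge0. Qed.

Lemma cutPM_le1 a : 0 <= a -> cutPM a <= 1.
Proof. by move=> a_ge0; rewrite /cutPM div1r invf_le1; lra. Qed.

Definition join1 (fM fP : bool) (a b : S2) : S2 :=
  match a, b with
  | Mi, Pl => if fM then Pl else Mi
  | Pl, Mi => if fP then Pl else Mi
  | _, _ => sqcup1 a b
  end.

Lemma sqcupP1E (a b : S2) : sqcupP1 a b = join1 true true a b.
Proof. by case: a; case: b; rewrite /sqcupP1 /join1 /sqcup1 /le1 ?S2_eqE. Qed.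

Lemma veeL1E (a b : S2) : veeL1 a b = join1 false true a b.
Proof. by case: a; case: b; rewrite /veeL1 /join1 /sqcup1 /le1 ?S2_eqE. Qed.

Lemma veeR1E (a b : S2) : veeR1 a b = join1 true false a b.
Proof. by case: a; case: b; rewrite /veeR1 /join1 /sqcup1 /le1 ?S2_eqE. Qed.

Lemma join1_opt a (fM fP : bool) (l h : R) (p q x : S2) :
  0 <= l -> l < h -> h <= 1 ->
  (if fM then cutMP a <= l else h <= cutMP a) ->
  (if fP then h <= cutPM a else cutPM a <= l) ->
  x = join1 fM fP p q <->
  [/\ between1 p q x, slope_lo1 a p q x <= l & h <= slope_hi1 a p q x].
Proof.
move=> l_ge0 lh h_le1; case: fM; case: fP => hP hM;
case: p; case: q; case: x; rewrite /join1 /sqcup1 /le1 ?S2_eqE /between1 /=;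
split=> [pqx | [pqx lo_l hi_h]] //; try (split; [by [] | lra | lra]); exfalso; lra.
Qed.

Variable alpha : nat -> R.

Definition gain1 (j : nat) w (p q y : S2) : R :=
  w.1 * (Defs.val1 alpha j (meet1 y p) - Defs.val1 alpha j (meet1 p q)) +
  w.2 * (Defs.val1 alpha j (meet1 y q) - Defs.val1 alpha j (meet1 p q)).

Lemma gain1_max_sector j w p q x :
  0 < alpha j.+1 -> 0 <= w.1 -> 0 <= w.2 -> between1 p q x ->
  (forall y, between1 p q y -> gain1 j w p q y <= gain1 j w p q x) <->
  slope_lo1 (alpha j.+1) p q x * (w.1 + w.2) <= w.2 /\
  w.2 <= slope_hi1 (alpha j.+1) p q x * (w.1 + w.2).
Proof.
case: w => w1 w2 /= a_gt0 w1_ge0 w2_ge0.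
have c_gt0 : 0 < 1 + alpha j.+1 by lra.
rewrite forall_S2 /gain1 /slope_lo1 /slope_hi1 /cutMP /cutPM.
case: p; case: q; case: x => //= _;
rewrite /meet1 !S2_eqE /= ?implyTp ?implyFp ?(frac_mix_le _ _ _ c_gt0)
  ?(le_frac_mix _ _ _ c_gt0) ?mul0r ?mul1r //;
split=> [[yM yZ yP] | [lo_w hi_w]]; try split; try done; nra.
Qed.
End Coordinates.

Section FractionalJoin.
Variables (R : realType) (n : nat) (alpha : nat -> R).
Hypothesis alpha_gt0 : forall i : nat, (0 < i <= n)%N -> 0 < alpha i.
Hypothesis alpha_mono :
  forall i j : nat, (0 < i)%N -> (i <= j)%N -> (j <= n)%N -> alpha i <= alpha j.
Hypothesis alpha_le1 : forall i : nat, (0 < i <= n)%N -> alpha i <= 1.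
Implicit Types (p q u x : S2n n) (w : R * R).

Lemma alpha_ord_gt0 (j : 'I_n) : 0 < alpha j.+1.
Proof. by apply: alpha_gt0; rewrite /= ltn_ord. Qed.

Lemma dotp_vpt w p q u :
  dotp w (vpt alpha p q u) = \sum_(j < n) gain1 alpha j w (p j) (q j) (u j).
Proof.
rewrite /dotp /vpt /valu /= -!sumrB !mulr_sumr -big_split /=.
by apply: eq_bigr => j _; rewrite !ffunE.
Qed.

Lemma separable_max w p q x : between p q x ->
  (forall u, between p q u -> dotp w (vpt alpha p q u) <= dotp w (vpt alpha p q x)) <->
  (forall (j : 'I_n) y, between1 (p j) (q j) y ->
     gain1 alpha j w (p j) (q j) y <= gain1 alpha j w (p j) (q j) (x j)).
Proof.
move=> /forallP pxq; split=> [x_max j y pyq | coord_max u /forallP puq].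
  have /x_max : between p q (set_coord x j y).
    by apply/forallP => i; rewrite set_coordE; case: eqP => [->|].
  rewrite !dotp_vpt (big_set_coord _ (fun i => gain1 alpha i w (p i) (q i))).
  by rewrite [X in _ <= X -> _](bigD1 j) //= lerD2r.
by rewrite !dotp_vpt; apply: ler_sum => j _; apply: coord_max.
Qed.

Lemma convI_vpt p q x : between p q x -> convI alpha p q (vpt alpha p q x).
Proof.
move=> pxq; have pick (F : S2n n -> R) : \sum_u (u == x)%:R * F u = F x.
  by rewrite (bigD1 x) //= eqxx mul1r big1 ?addr0 // => u /negbTE ->; rewrite mul0r.
exists (fun u => (u == x)%:R); split.
- by move=> u; rewrite ler0n.
- by move=> u; case: eqP => // -> []; apply/IsetP.
- by have := pick (fun _ => 1); under eq_bigr do rewrite mulr1.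
- by rewrite !pick; case: vpt.
Qed.

Lemma convI_dotp_le w p q z (c : R) :
  (forall u, between p q u -> dotp w (vpt alpha p q u) <= c) ->
  convI alpha p q z -> dotp w z <= c.
Proof.
move=> le_c [lam [lam_ge0 lam_out lam1 ->]].
have -> : dotp w (\sum_u lam u * (vpt alpha p q u).1, \sum_u lam u * (vpt alpha p q u).2)
        = \sum_u lam u * dotp w (vpt alpha p q u).
  by rewrite /dotp /= !mulr_sumr -big_split /=; apply: eq_bigr => u _; ring.
rewrite -[c]mul1r -lam1 mulr_suml; apply: ler_sum => u _.
case: (pselect (Iset p q u)) => [/IsetP puq | /lam_out ->]; last by rewrite !mul0r.
by rewrite ler_wpM2l ?le_c.
Qed.

Definition slope_lo p q x : R :=
  \big[Num.max/0]_(j < n) slope_lo1 (alpha j.+1) (p j) (q j) (x j).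
Definition slope_hi p q x : R :=
  \big[Num.min/1]_(j < n) slope_hi1 (alpha j.+1) (p j) (q j) (x j).

Lemma Ccone_sector p q x : between p q x ->
  Ccone alpha p q x = sector (slope_lo p q x) (slope_hi p q x).
Proof.
move=> pxq; apply/funext => w; apply/propext.
split=> [[w1_ge0 w2_ge0 _ x_max] | [w1_ge0 w2_ge0 lo_w hi_w]];
  have coord j := gain1_max_sector (alpha_ord_gt0 j) w1_ge0 w2_ge0 (forallP pxq j).
  have x_max_j := (separable_max w pxq).1 (fun u puq => x_max _ (convI_vpt puq)).
  split=> //; [apply/bigmax_mulr_le | apply/le_bigmin_mulr];
    rewrite ?addr_ge0 ?lerDr // => j; by case: ((coord j).1 (x_max_j j)).
split=> //; first exact: convI_vpt.
move=> z; apply: convI_dotp_le; apply/(separable_max w pxq) => j; apply/coord.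
by split; move: j; [apply/bigmax_mulr_le | apply/le_bigmin_mulr]; rewrite ?addr_ge0 ?lerDr.
Qed.

Lemma alph_ge0 k : (k <= n)%N -> 0 <= alph alpha k.
Proof.
rewrite /alph; case: eqP => // /eqP k0 kn.
by apply/ltW/alpha_gt0; rewrite lt0n k0.
Qed.

Lemma alph_le1 k : (k <= n)%N -> alph alpha k <= 1.
Proof.
rewrite /alph; case: eqP => [_ _ | /eqP k0 kn]; first exact: ler01.
by apply: alpha_le1; rewrite lt0n k0.
Qed.

Lemma alph_le i j : (i <= j)%N -> (j <= n)%N -> alph alpha i <= alph alpha j.
Proof.
move=> ij jn; have [->|i0] := eqVneq i 0%N; first by rewrite {1}/alph eqxx alph_ge0.
rewrite /alph (negbTE i0) ifN; last by rewrite -lt0n (leq_trans _ ij) // lt0n.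
by apply: alpha_mono; rewrite // lt0n.
Qed.

(* The breakpoints 0 = A_0 <= ... <= A_n <= B_n <= ... <= B_0 = 1, indexed by
   k = 0 .. 2n+1, with A_k = cutMP alpha_k and B_k = cutPM alpha_k. *)
Definition breakpoint (k : nat) : R :=
  if (k <= n)%N then cutMP (alph alpha k) else cutPM (alph alpha ((n + n).+1 - k)).

Lemma breakpoint_le_succ k : (k < (n + n).+1)%N -> breakpoint k <= breakpoint k.+1.
Proof.
move=> k_lt; rewrite /breakpoint; case: leqP => kn; case: leqP => kn'.
- have -> : ((n + n).+1 - k.+1 = n)%N by lia.
  have -> : k = n by lia.
  by apply: le_trans (cutMP_le_half _ _) (half_le_cutPM _ _); rewrite ?alph_ge0 ?alph_le1.
- by apply: cutPM_le; [apply: alph_ge0 | apply: alph_le]; lia.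
- by apply: cutMP_le; [apply: alph_ge0 | apply: alph_le]; lia.
- by exfalso; lia.
Qed.

Lemma breakpoint_le i j :
  (i <= j)%N -> (j <= (n + n).+1)%N -> breakpoint i <= breakpoint j.
Proof. by move=> ij jn; apply: (step_homo_le breakpoint_le_succ ij jn). Qed.

Lemma breakpoint01 k : (k <= (n + n).+1)%N -> 0 <= breakpoint k <= 1.
Proof.
move=> k_le; rewrite /breakpoint; case: leqP => kn; apply/andP; split.
- exact/cutMP_ge0/alph_ge0.
- by apply: le_trans (cutMP_le_half (alph_ge0 kn) (alph_le1 kn)) _; lra.
- have kn' : ((n + n).+1 - k <= n)%N by lia.
  by apply: le_trans (half_le_cutPM (alph_ge0 kn') (alph_le1 kn')); lra.
- by apply/cutPM_le1/alph_ge0; lia.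
Qed.

Lemma breakpoint0 : breakpoint 0 = 0.
Proof. by rewrite /breakpoint leq0n /alph eqxx /cutMP mul0r. Qed.

Lemma breakpoint_last : breakpoint (n + n).+1 = 1.
Proof.
rewrite /breakpoint ifN; last by rewrite -ltnNge ltnS leq_addr.
by rewrite subnn /alph eqxx /cutPM addr0 divr1.
Qed.

Lemma breakpoint_cutMP j : (j < n)%N -> breakpoint j.+1 = cutMP (alpha j.+1).
Proof. by move=> jn; rewrite /breakpoint jn. Qed.

Lemma breakpoint_cutPM j : (j < n)%N -> breakpoint (n + n - j) = cutPM (alpha j.+1).
Proof.
move=> jn; rewrite /breakpoint ifN; last lia.
by have -> : ((n + n).+1 - (n + n - j) = j.+1)%N by lia.
Qed.

Lemma breakpoint_of_cut (j : 'I_n) v :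
  v \in [:: 0; 1; cutMP (alpha j.+1); cutPM (alpha j.+1)] ->
  exists2 k, (k <= (n + n).+1)%N & breakpoint k = v.
Proof.
have jn := ltn_ord j; rewrite !inE => /or4P [] /eqP ->.
- by exists 0%N; rewrite ?breakpoint0.
- by exists (n + n).+1; rewrite ?breakpoint_last.
- by exists j.+1; rewrite ?breakpoint_cutMP //; lia.
- by exists (n + n - j)%N; rewrite ?breakpoint_cutPM //; lia.
Qed.

Lemma slope_lo_breakpoint p q x :
  exists2 k, (k <= (n + n).+1)%N & breakpoint k = slope_lo p q x.
Proof.
apply: (big_ind (fun v => exists2 k, (k <= (n + n).+1)%N & breakpoint k = v)).
- by exists 0%N; rewrite ?breakpoint0.
- by move=> a b [ka ? <-] [kb ? <-]; rewrite maxEle; case: ifP => _; [exists kb | exists ka].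
- by move=> j _; apply/breakpoint_of_cut/slope_lo1_cases.
Qed.

Lemma slope_hi_breakpoint p q x :
  exists2 k, (k <= (n + n).+1)%N & breakpoint k = slope_hi p q x.
Proof.
apply: (big_ind (fun v => exists2 k, (k <= (n + n).+1)%N & breakpoint k = v)).
- by exists (n + n).+1; rewrite ?breakpoint_last.
- by move=> a b [ka ? <-] [kb ? <-]; rewrite minEle; case: ifP => _; [exists ka | exists kb].
- by move=> j _; apply/breakpoint_of_cut/slope_hi1_cases.
Qed.

Lemma slope_lo01 p q x : 0 <= slope_lo p q x <= 1.
Proof. by have [k k_le <-] := slope_lo_breakpoint p q x; apply: breakpoint01. Qed.

Lemma slope_hi01 p q x : 0 <= slope_hi p q x <= 1.
Proof. by have [k k_le <-] := slope_hi_breakpoint p q x; apply: breakpoint01. Qed.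

Definition join_seq p q (k : nat) : S2n n :=
  if (k < n)%N then veeLI k p q else if k == n then sqcupI n p q else veeRI (n + n - k) p q.

Lemma join_seqL p q i : (i < n)%N -> join_seq p q i = veeLI i p q.
Proof. by move=> i_lt; rewrite /join_seq i_lt. Qed.

Lemma join_seqM p q : join_seq p q n = sqcupI n p q.
Proof. by rewrite /join_seq ltnn eqxx. Qed.

Lemma join_seqR p q i : (i < n)%N -> join_seq p q (n + n - i) = veeRI i p q.
Proof.
move=> i_lt; rewrite /join_seq ifN ?ifN; try lia.
by have -> : (n + n - (n + n - i) = i)%N by lia.
Qed.

Lemma join_seq_coord p q k (j : 'I_n) : (k < (n + n).+1)%N ->
  exists fM fP, [/\ join_seq p q k j = join1 fM fP (p j) (q j),
    (if fM then cutMP (alpha j.+1) <= breakpoint k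
     else breakpoint k.+1 <= cutMP (alpha j.+1)) &
    (if fP then breakpoint k.+1 <= cutPM (alpha j.+1)
     else cutPM (alpha j.+1) <= breakpoint k)].
Proof.
move=> k_lt; have jn := ltn_ord j.
rewrite -breakpoint_cutMP // -breakpoint_cutPM //; case: (ltngtP k n) => [kn | nk | ->].
- exists (j < k)%N, true; rewrite join_seqL // ffunE; split.
  + by case: ifP; rewrite ?sqcupP1E ?veeL1E.
  + by case: ltnP => jk; apply: breakpoint_le; lia.
  + by apply: breakpoint_le; lia.
- exists true, (j < n + n - k)%N.
  have ki : k = (n + n - (n + n - k))%N by lia.
  rewrite {1}ki join_seqR ?ffunE; last lia; split.
  + by case: ifP; rewrite ?sqcupP1E ?veeR1E.
  + by apply: breakpoint_le; lia.
  + by case: ltnP => jk; apply: breakpoint_le; lia.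
- exists true, true; rewrite join_seqM ffunE jn sqcupP1E.
  by split=> //; apply: breakpoint_le; lia.
Qed.

Lemma join_seq_opt p q x k : (k < (n + n).+1)%N -> breakpoint k < breakpoint k.+1 ->
  (join_seq p q k == x) =
  [&& between p q x, slope_lo p q x <= breakpoint k & breakpoint k.+1 <= slope_hi p q x].
Proof.
move=> k_lt bp_lt.
have /andP [l_ge0 _] := breakpoint01 (ltnW k_lt).
have /andP [_ h_le1] := breakpoint01 k_lt.
have coord (y : S2n n) (j : 'I_n) : y j = join_seq p q k j <->
    [/\ between1 (p j) (q j) (y j),
         slope_lo1 (alpha j.+1) (p j) (q j) (y j) <= breakpoint k &
         breakpoint k.+1 <= slope_hi1 (alpha j.+1) (p j) (q j) (y j)].
  have [fM [fP [-> hM hP]]] := join_seq_coord p q j k_lt.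
  exact: join1_opt.
apply/eqP/and3P => [<- | [/forallP pxq /bigmax_leP [_ lo_k] /bigmin_geP [_ hi_k]]].
  have {}coord j := (coord (join_seq p q k) j).1 erefl.
  split; first by apply/forallP => j; case: (coord j).
    by apply/bigmax_leP; split=> // j _; case: (coord j).
  by apply/bigmin_geP; split=> // j _; case: (coord j).
apply/ffunP => j; symmetry; apply/coord.
by split; [exact: pxq | exact: lo_k | exact: hi_k].
Qed.

Lemma breakpoint_stepL i : (i < n)%N ->
  breakpoint i.+1 - breakpoint i = (1 + alph alpha i)^-1 - (1 + alph alpha i.+1)^-1.
Proof.
move=> i_lt; rewrite /breakpoint i_lt ltnW // !cutMPE ?alph_ge0 //; last exact: ltnW.
by rewrite /cutPM !div1r; ring.
Qed.

Lemma breakpoint_stepR i : (i < n)%N ->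
  breakpoint (n + n - i).+1 - breakpoint (n + n - i) =
  (1 + alph alpha i)^-1 - (1 + alph alpha i.+1)^-1.
Proof.
move=> i_lt; rewrite /breakpoint !ifN; try lia.
have -> : ((n + n).+1 - (n + n - i).+1 = i)%N by lia.
have -> : ((n + n).+1 - (n + n - i) = i.+1)%N by lia.
by rewrite /cutPM !div1r.
Qed.

Lemma breakpoint_stepM :
  breakpoint n.+1 - breakpoint n = (1 - alph alpha n) / (1 + alph alpha n).
Proof.
rewrite /breakpoint ltnn leqnn subSS addnK cutMPE ?alph_ge0 // /cutPM.
by field; have := alph_ge0 (leqnn n); lra.
Qed.

Lemma rhs_comb_breakpoint p q x : rhs_comb alpha p q x =
  \sum_(0 <= k < (n + n).+1) (breakpoint k.+1 - breakpoint k) * (join_seq p q k == x)%:R.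
Proof.
set F := fun k => (breakpoint k.+1 - breakpoint k) * (join_seq p q k == x)%:R.
rewrite (@big_cat_nat _ _ _ n) //=; last lia.
rewrite (@big_ltn _ _ _ n); last lia.
have -> : \sum_(n.+1 <= k < (n + n).+1) F k = \sum_(0 <= i < n) F (n + n - i)%N.
  rewrite -{1}(add0n n.+1) big_addn (_ : ((n + n).+1 - n.+1 = n)%N); last lia.
  by rewrite big_nat_rev /=; apply: eq_big_nat => i i_lt; congr F; lia.
rewrite /rhs_comb !big_mkord (eq_bigr _ (fun i _ => mulrDr _ _ _)) big_split /=.
rewrite addrAC -addrA; congr (_ + (_ + _)).
- by apply: eq_bigr => i _; rewrite /F breakpoint_stepL // join_seqL.
- by rewrite /F breakpoint_stepM join_seqM.
- by apply: eq_bigr => i _; rewrite /F breakpoint_stepR // join_seqR.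
Qed.

Lemma rhs_comb_window p q x : rhs_comb alpha p q x =
  \sum_(0 <= k < (n + n).+1) (breakpoint k.+1 - breakpoint k) *
    [&& between p q x, slope_lo p q x <= breakpoint k & breakpoint k.+1 <= slope_hi p q x]%:R.
Proof.
rewrite rhs_comb_breakpoint; apply: eq_big_nat => k /andP [_ k_lt].
have [bp_lt | bp_ge] := ltP (breakpoint k) (breakpoint k.+1).
  by rewrite join_seq_opt.
have -> : breakpoint k.+1 = breakpoint k.
  by apply/eqP; rewrite eq_le bp_ge breakpoint_le_succ.
by rewrite subrr !mul0r.
Qed.

Lemma Eset_of_lt p q x :
  between p q x -> slope_lo p q x < slope_hi p q x -> Eset alpha p q x.
Proof.
move=> pxq lo_hi.
have /andP [lo_ge0 _] := slope_lo01 p q x; have /andP [_ hi_le1] := slope_hi01 p q x.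
set L := slope_lo p q x in lo_hi lo_ge0 *; set U := slope_hi p q x in lo_hi hi_le1 *.
have supp s : L <= s <= U -> forall v, convI alpha p q v ->
    dotp (1 - s, s) v <= dotp (1 - s, s) (vpt alpha p q x).
  move=> /andP [Ls sU]; have s01 : 0 <= s <= 1 by apply/andP; split; lra.
  have : Ccone alpha p q x (1 - s, s).
    by rewrite Ccone_sector //; apply/(sector_slope _ _ s01); rewrite Ls.
  by case.
split; first exact/IsetP.
apply: (@extreme_cw_maximal_of_slopes _ _ _ (L + (U - L) / 3) (L + 2 * (U - L) / 3));
  [lra | lra | lra | exact: convI_vpt | |]; by apply: supp; apply/andP; split; lra.
Qed.

Lemma frac_join_between p q x : between p q x ->
  frac_join alpha p q x = Num.max 0 (slope_hi p q x - slope_lo p q x).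
Proof.
move=> pxq; rewrite /frac_join; case: asboolP => [_ | notE].
  by rewrite Ccone_sector // cone_meas_sector ?slope_lo01 ?slope_hi01.
have [lo_hi | hi_lo] := ltP (slope_lo p q x) (slope_hi p q x).
  by case: notE; apply: Eset_of_lt.
by rewrite max_l // subr_le0.
Qed.

Lemma frac_join_notin p q x : ~~ between p q x -> frac_join alpha p q x = 0.
Proof.
move=> pxq; rewrite /frac_join; case: asboolP => [[/IsetP pxq' _] | _] //.
by case/negP: pxq.
Qed.
End FractionalJoin.

Unset Implicit Arguments.
Theorem proposition3p15 (R : realType) (n : nat) (alpha : nat -> R)
  (Hpos : forall i : nat, (0 < i <= n)%N -> 0 < alpha i)
  (Hmono : forall i j : nat, (0 < i)%N -> (i <= j)%N -> (j <= n)%N -> alpha i <= alpha j)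
  (Hle1 : forall i : nat, (0 < i <= n)%N -> alpha i <= 1) :
  forall p q : S2n n, frac_join alpha p q = rhs_comb alpha p q.
Proof.
move=> p q; apply/funext => x.
rewrite (rhs_comb_window Hpos Hmono Hle1).
have [pxq | pxq] := boolP (between p q x); last first.
  by rewrite frac_join_notin // big1 // => k _; rewrite mulr0.
rewrite (frac_join_between Hpos Hle1 pxq).
have [kL kL_le <-] := slope_lo_breakpoint alpha p q x.
have [kU kU_le <-] := slope_hi_breakpoint alpha p q x.
by rewrite telescope_window // => k; apply: breakpoint_le_succ.
Qed.
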